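(* Let $A\subset E$ be nonempty, and suppose that the problem $$\min_L \xi(L)\quad\text{s.t. } L\text{ is a lower contour set in } A$$ admits a solution (a minimizer). Then it has a largest minimizer, i.e. a minimizer $L^\star$ such that every minimizer $L$ satisfies $L\subset L^\star$.
   Context: $E$ is a finite or countably infinite set with a preorder $\precsim$ (reflexive and transitive) such that for every sequence $e_1\succsim e_2\succsim\cdots$ in $E$ there is $N\ge1$ with $e_N\precsim e_n$ for all $n\ge N$. $\pi_0\in(0,1)$; $F_G,F_B$ are probability distributions on $E$ such that every $e\in E$ has $F_G(e)>0$ or $F_B(e)>0$. For nonempty $B\subset E$, $\nu(B)=\frac{F_G(B)\pi_0}{F_G(B)\pi_0+F_B(B)(1-\pi_0)}$ and $\xi(B)=\phi(\nu(B))$, where $\phi:[0,1]\to\mathbb{R}$ is strictly increasing. For nonempty $A\subset E$, a nonempty $L\subset A$ is a lower contour set in $A$ if for all $e\in L$ and $e'\in A$, $e'\precsim e$ implies $e'\in L$. *)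

From HB Require Import structures.
From mathcomp Require Import all_boot all_order all_algebra.
From mathcomp Require Import classical_sets boolp reals ereal esum.
Set Implicit Arguments. Unset Strict Implicit. Unset Printing Implicit Defensive.
Import Order.TTheory GRing.Theory Num.Theory.
Local Open Scope classical_set_scope.
Local Open Scope ring_scope.

Section Defs.
Context {R : realType} {E : countType}.

Definition is_distribution (p : E -> R) : Prop :=
  (forall e, 0 <= p e) /\ (\esum_(i in [set: E]) (p i)%:E = 1%E).

Definition prob (p : E -> R) (B : set E) : R := fine (\esum_(i in B) (p i)%:E).

Definition nu (pi0 : R) (pG pB : E -> R) (B : set E) : R :=
  prob pG B * pi0 / (prob pG B * pi0 + prob pB B * (1 - pi0)).

Definition xi (phi : R -> R) (pi0 : R) (pG pB : E -> R) (B : set E) : R :=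
  phi (nu pi0 pG pB B).

(* L is a lower contour set in A w.r.t. the preorder le (le x y means x ≾ y) *)
Definition lower_contour (le : E -> E -> Prop) (A L : set E) : Prop :=
  L !=set0 /\ L `<=` A /\
  (forall e e', L e -> A e' -> le e' e -> L e').

Definition is_minimizer (le : E -> E -> Prop) (f : set E -> R) (A L : set E) : Prop :=
  lower_contour le A L /\ (forall L', lower_contour le A L' -> f L <= f L').

End Defs.

From Pilot Require Import Defs.
From HB Require Import structures.
From mathcomp Require Import all_boot all_order all_algebra.
From mathcomp Require Import classical_sets boolp reals ereal esum.
From mathcomp Require Import cardinality finmap.
From mathcomp Require Import ring lra.
Import Order.TTheory GRing.Theory Num.Theory.
Local Open Scope classical_set_scope.
Local Open Scope ring_scope.

(* Since phi is strictly increasing and nu takes values in [0, 1], the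
   minimizers of xi are those of nu.  Let m be the minimal value of nu.  For a
   nonempty S, nu S - m has the sign of the modular set function
   nu_excess m S = pi0 (1 - m) F_G(S) - m (1 - pi0) F_B(S), which is therefore
   nonpositive exactly on the minimizers and nonnegative on every lower contour
   set.  By modularity, the union of two minimizers is a minimizer, since their
   intersection is empty or again a lower contour set.  Hence the minimizers
   form a directed family: F_G of their union is approximated by F_G of a
   single minimizer, while F_B can only grow, so nu_excess m stays
   nonpositive on the union, which is thus the largest minimizer. *)

Section directed_family.
Context {T : choiceType} {F : set (set T)}.
Hypotheses (F_neq0 : F !=set0) (FU : forall V W, F V -> F W -> F (V `|` W)).

Lemma directed_cover_seq (s : seq T) :
  (forall x, x \in s -> (\bigcup_(V in F) V) x) ->
  exists2 V, F V & forall x, x \in s -> V x.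
Proof.
elim: s => [_|x s IHs xs_cover]; first by case: F_neq0 => V FV; exists V.
have [Vx FVx Vxx] := xs_cover x (mem_head x s).
have [V FV sV] : exists2 V, F V & forall y, y \in s -> V y.
  by apply: IHs => y ys; apply: xs_cover; rewrite in_cons ys orbT.
exists (Vx `|` V); first exact: FU.
by move=> y; rewrite in_cons => /predU1P[->|/sV]; [left|right].
Qed.

Lemma directed_cover_finite (X : set T) :
  finite_set X -> X `<=` \bigcup_(V in F) V -> exists2 V, F V & X `<=` V.
Proof.
case/finite_fsetP => Y -> XF.
have [V FV YV] := directed_cover_seq (Y : seq T) XF.
by exists V => // x; apply: YV.
Qed.

End directed_family.

Section prob.
Context {R : realType} {E : countType} {p : E -> R}.
Hypothesis p_distr : is_distribution p.

Let p_ge0 i : (0 <= (p i)%:E)%E.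
Proof. by rewrite lee_fin; case: p_distr. Qed.

Lemma le_esum_set {S T : set E} : S `<=` T ->
  (\esum_(i in S) (p i)%:E <= \esum_(i in T) (p i)%:E)%E.
Proof.
move=> ST; rewrite esum_mkcond [leRHS]esum_mkcond; apply: le_esum => i _.
case: ifPn => [/set_mem/ST/mem_set -> //|_]; by case: ifP.
Qed.

Lemma esum_prob (S : set E) : \esum_(i in S) (p i)%:E = (prob p S)%:E.
Proof.
rewrite /prob fineK // ge0_fin_numE; last exact: esum_ge0.
apply: (le_lt_trans (le_esum_set (subsetT S))).
by case: p_distr => _ ->; rewrite ltry.
Qed.

Lemma prob_ge0 (S : set E) : 0 <= prob p S.
Proof. by rewrite -lee_fin -esum_prob; exact: esum_ge0. Qed.

Lemma le_prob (S T : set E) : S `<=` T -> prob p S <= prob p T.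
Proof. by move=> ST; rewrite -lee_fin -!esum_prob; exact: le_esum_set. Qed.

Lemma prob_ge_mass {S : set E} {e : E} : S e -> p e <= prob p S.
Proof.
move=> Se; rewrite -lee_fin -esum_prob.
rewrite -(@esum_set1 _ _ e (fun i => (p i)%:E)) //.
by apply: le_esum_set => x ->.
Qed.

Lemma prob_set0 : prob p set0 = 0.
Proof. by rewrite /prob esum_set0. Qed.

Lemma probUI (S T : set E) :
  prob p (S `|` T) + prob p (S `&` T) = prob p S + prob p T.
Proof.
apply: EFin_inj.
rewrite !EFinD -!esum_prob (esumID S (S `|` T)) ?(esumID S T) //.
rewrite setUK (setIC T S).
have -> : (S `|` T) `&` ~` S = T `&` ~` S by apply/seteqP; split=> x /=; tauto.
by rewrite -addeA [X in (_ + X)%E]addeC.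
Qed.

Lemma prob_directed_bigcup (F : set (set E)) : F !=set0 ->
  (forall V W, F V -> F W -> F (V `|` W)) ->
  forall eps : R, 0 < eps ->
  exists2 V, F V & prob p (\bigcup_(V in F) V) - eps < prob p V.
Proof.
move=> F_neq0 FU eps eps_gt0.
have : ((prob p (\bigcup_(V in F) V) - eps)%:E <
         \esum_(i in \bigcup_(V in F) V) (p i)%:E)%E.
  by rewrite esum_prob lte_fin ltrBlDr ltrDl.
case/ereal_sup_gt => _ [X [finX XF] <-] ltX.
have [V FV XV] := directed_cover_finite F_neq0 FU X finX XF.
exists V => //; rewrite -lte_fin -esum_prob (lt_le_trans ltX) //.
by apply: esum_ge; exists X.
Qed.

End prob.

Section lower_contour.
Context {E : countType} {le : E -> E -> Prop} {A : set E}.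

Lemma lower_contourU (S T : set E) :
  lower_contour le A S -> lower_contour le A T -> lower_contour le A (S `|` T).
Proof.
move=> [[x Sx] [SA S_low]] [_ [TA T_low]]; split; first by exists x; left.
split; first by move=> y [/SA|/TA].
by move=> e e' [/S_low|/T_low] low Ae' e'e; [left|right]; exact: low.
Qed.

Lemma lower_contourI (S T : set E) : S `&` T !=set0 ->
  lower_contour le A S -> lower_contour le A T -> lower_contour le A (S `&` T).
Proof.
move=> ST0 [_ [SA S_low]] [_ [_ T_low]]; split=> //.
split; first by move=> y [/SA].
move=> e e' [Se Te] Ae' e'e.
by split; [exact: S_low Se Ae' e'e|exact: T_low Te Ae' e'e].
Qed.

Lemma lower_contour_bigcup (F : set (set E)) : F !=set0 ->
  (forall L, F L -> lower_contour le A L) ->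
  lower_contour le A (\bigcup_(L in F) L).
Proof.
move=> [L FL] F_low; have [[x Lx] _] := F_low L FL.
split; first by exists x, L.
split; first by move=> y [M /F_low [_ [MA _]] /MA].
move=> e e' [M FM Me] Ae' e'e; exists M => //.
by have [_ [_ M_low]] := F_low M FM; exact: M_low Me Ae' e'e.
Qed.

End lower_contour.

Section minimizer.
Context {R : realType} {E : countType} {le : E -> E -> Prop} {A : set E}.

Lemma is_minimizer_comp {phi : R -> R} {f : set E -> R} :
  (forall x y, 0 <= x -> y <= 1 -> x < y -> phi x < phi y) ->
  (forall S, lower_contour le A S -> 0 <= f S <= 1) ->
  forall L, is_minimizer le (fun S => phi (f S)) A L <-> is_minimizer le f A L.
Proof.
move=> phi_mono f01.
have phi_le S T : lower_contour le A S -> lower_contour le A T ->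
    (phi (f S) <= phi (f T)) = (f S <= f T).
  move=> /f01 /andP[S0 S1] /f01 /andP[T0 T1]; apply/idP/idP.
    by apply: contraTT; rewrite -!ltNge; exact: phi_mono.
  by rewrite le_eqVlt => /predU1P[->//|/phi_mono-/(_ S0 T1)/ltW].
split=> -[L_low L_min]; split=> // S S_low.
  by rewrite -(phi_le L S) //; exact: L_min.
by rewrite phi_le //; exact: L_min.
Qed.

Lemma is_minimizer_iff {f : set E -> R} {L0 : set E} :
  is_minimizer le f A L0 ->
  forall M, is_minimizer le f A M <-> lower_contour le A M /\ f M <= f L0.
Proof.
move=> [L0_low L0_min] M; split=> [[M_low M_min]|[M_low ML0]].
  by split; last exact: M_min.
by split=> // S /L0_min; exact: le_trans.
Qed.

End minimizer.

Definition nu_excess {R : realType} {E : countType} (pi0 : R) (pG pB : E -> R)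
    (m : R) (S : set E) :=
  prob pG S * (pi0 * (1 - m)) - prob pB S * (m * (1 - pi0)).

Section nu.
Context {R : realType} {E : countType} { pi0 : R }.
Context {pG pB : E -> R}.
Hypothesis pi0_01 : 0 < pi0 < 1.
Hypotheses (pG_distr : is_distribution pG) (pB_distr : is_distribution pB).
Hypothesis supp : forall e, 0 < pG e \/ 0 < pB e.
Context {le : E -> E -> Prop} {A : set E}.

Let nu := nu pi0 pG pB.
Let den (S : set E) := prob pG S * pi0 + prob pB S * (1 - pi0).
Local Notation excess := (nu_excess pi0 pG pB).

Lemma nu_den_gt0 (S : set E) : S !=set0 -> 0 < den S.
Proof.
case=> e Se; have /andP[pi0_gt0 pi0_lt1] := pi0_01.
have G0 := prob_ge0 pG_distr S; have B0 := prob_ge0 pB_distr S.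
have Ge := prob_ge_mass pG_distr Se; have Be := prob_ge_mass pB_distr Se.
by rewrite /den; case: (supp e) => ?; nra.
Qed.

Lemma nuB {S : set E} {m : R} : S !=set0 -> nu S - m = excess m S / den S.
Proof.
move=> /nu_den_gt0 /lt0r_neq0; rewrite /den => den_neq0.
by rewrite /nu /Defs.nu /nu_excess; field.
Qed.

Lemma nu_le_excess {S : set E} {m : R} : S !=set0 ->
  (nu S <= m) = (excess m S <= 0).
Proof.
by move=> S0; rewrite -subr_le0 nuB // pmulr_lle0 // invr_gt0 nu_den_gt0.
Qed.

Lemma nu_ge_excess {S : set E} {m : R} : S !=set0 ->
  (m <= nu S) = (0 <= excess m S).
Proof.
by move=> S0; rewrite -subr_ge0 nuB // pmulr_lge0 // invr_gt0 nu_den_gt0.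
Qed.

Lemma nu_ge0_le1 (S : set E) : S !=set0 -> 0 <= nu S <= 1.
Proof.
move=> S0; have /andP[pi0_gt0 pi0_lt1] := pi0_01.
rewrite nu_ge_excess // nu_le_excess // /nu_excess.
have G0 := prob_ge0 pG_distr S; have B0 := prob_ge0 pB_distr S.
by apply/andP; split; nra.
Qed.

Lemma nu_excess_set0 (m : R) : excess m set0 = 0.
Proof. by rewrite /nu_excess !prob_set0 !mul0r subrr. Qed.

Lemma nu_excessUI (m : R) (S T : set E) :
  excess m (S `|` T) + excess m (S `&` T) = excess m S + excess m T.
Proof.
have G := probUI pG_distr S T; have B := probUI pB_distr S T.
rewrite /nu_excess; nra.
Qed.

Lemma nu_excess_directed_bigcup (m : R) (F : set (set E)) : 0 <= m <= 1 ->
  F !=set0 -> (forall V W, F V -> F W -> F (V `|` W)) ->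
  (forall V, F V -> excess m V <= 0) -> excess m (\bigcup_(V in F) V) <= 0.
Proof.
move=> /andP[m0 m1] F_neq0 FU F_le0; have /andP[pi0_gt0 pi0_lt1] := pi0_01.
apply/ler_addgt0Pr => eps eps_gt0; rewrite add0r.
have [V FV ltV] := prob_directed_bigcup pG_distr F F_neq0 FU eps eps_gt0.
have BV : prob pB V <= prob pB (\bigcup_(V in F) V).
  by apply: le_prob => // x Vx; exists V.
have := F_le0 V FV; rewrite /nu_excess => V_le0.
set c1 := pi0 * (1 - m) in V_le0 *; set c2 := m * (1 - pi0) in V_le0 *.
have c1_ge0 : 0 <= c1 by rewrite /c1; nra.
have c1_le1 : c1 <= 1 by rewrite /c1; nra.
have c2_ge0 : 0 <= c2 by rewrite /c2; nra.
nra.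
Qed.

Lemma is_minimizer_nu_excess {L0 : set E} : is_minimizer le nu A L0 ->
  forall M, is_minimizer le nu A M <->
            lower_contour le A M /\ excess (nu L0) M <= 0.
Proof.
move=> L0_min M; rewrite (is_minimizer_iff L0_min).
by split=> -[M_low]; have [M0 _] := M_low; rewrite (nu_le_excess M0).
Qed.

Lemma lower_contour_nu_excess_ge0 (L0 S : set E) : is_minimizer le nu A L0 ->
  lower_contour le A S -> 0 <= excess (nu L0) S.
Proof.
move=> [_ L0_min] S_low; have [S0 _] := S_low.
by rewrite -(nu_ge_excess S0); exact: L0_min.
Qed.

Lemma is_minimizerU_nu (M1 M2 : set E) : is_minimizer le nu A M1 ->
  is_minimizer le nu A M2 -> is_minimizer le nu A (M1 `|` M2).
Proof.
move=> M1_min M2_min; have M_excess := is_minimizer_nu_excess M1_min.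
have /M_excess[M1_low M1_le0] := M1_min.
have /M_excess[M2_low M2_le0] := M2_min.
apply/M_excess; split; first exact: lower_contourU.
have MI_ge0 : 0 <= excess (nu M1) (M1 `&` M2).
  have [->|/set0P MI0] := eqVneq (M1 `&` M2) set0.
    by rewrite nu_excess_set0.
  by apply: lower_contour_nu_excess_ge0 M1_min _; exact: lower_contourI.
have := nu_excessUI (nu M1) M1 M2; lra.
Qed.

Lemma is_minimizer_bigcup_nu {L0 : set E} : is_minimizer le nu A L0 ->
  is_minimizer le nu A (\bigcup_(M in is_minimizer le nu A) M).
Proof.
move=> L0_min; have M_excess := is_minimizer_nu_excess L0_min.
have F0 : is_minimizer le nu A !=set0 by exists L0.
apply/M_excess; split; first by apply: lower_contour_bigcup F0 _ => M [].
apply: nu_excess_directed_bigcup => //.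
- by have [[L00 _] _] := L0_min; exact: nu_ge0_le1.
- exact: is_minimizerU_nu.
- by move=> V /M_excess [].
Qed.

End nu.

Theorem lemmaA5 (R : realType) (E : countType) (le : E -> E -> Prop)
  (le_refl : forall e, le e e)
  (le_trans : forall e1 e2 e3, le e1 e2 -> le e2 e3 -> le e1 e3)
  (le_dcc : forall s : nat -> E, (forall n, le (s n.+1) (s n)) ->
            exists N : nat, forall n, (N <= n)%N -> le (s N) (s n))
  (pi0 : R) (hpi0 : 0 < pi0 < 1)
  (pG pB : E -> R) (hG : is_distribution pG) (hB : is_distribution pB)
  (hsupp : forall e, 0 < pG e \/ 0 < pB e)
  (phi : R -> R)
  (hphi : forall x y, 0 <= x -> y <= 1 -> x < y -> phi x < phi y)
  (A : set E) (hA : A !=set0)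
  (hex : exists L, is_minimizer le (xi phi pi0 pG pB) A L) :
  exists Lstar, is_minimizer le (xi phi pi0 pG pB) A Lstar /\
    forall L, is_minimizer le (xi phi pi0 pG pB) A L -> L `<=` Lstar.
Proof.
have nu01 S : lower_contour le A S -> 0 <= nu pi0 pG pB S <= 1.
  by case=> S0 _; exact: nu_ge0_le1.
have xi_nu : forall L, is_minimizer le (xi phi pi0 pG pB) A L <->
    is_minimizer le (nu pi0 pG pB) A L := is_minimizer_comp hphi nu01.
have [L0 /xi_nu L0_min] := hex.
exists (\bigcup_(M in is_minimizer le (nu pi0 pG pB) A) M); split.
  by apply/xi_nu; apply: (is_minimizer_bigcup_nu hpi0 hG hB hsupp L0_min).
by move=> L /xi_nu L_min x Lx; exists L.
Qed.
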